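(* Let $(S,* )$ be a finite cycle set of size $n$ and Dehornoy class $d>1$, and let $d=p_1^{a_1}\cdots p_r^{a_r}$ be the prime factorization of $d$ (the $p_i$ pairwise distinct, $a_i\ge 1$). Then there exist cycle set structures $*_1,\dots,*_r$ on the same set $S$ such that the class $d_i$ of $(S,*_i)$ is a power of $p_i$ for each $i$, and the germ $\overline G$ of $(S,* )$ is the product set $$\overline G=\iota_{d_1}^{d}(\overline G_1)\,\iota_{d_2}^{d}(\overline G_2)\cdots\iota_{d_r}^{d}(\overline G_r),$$ where $\overline G_i$ is the germ of $(S,*_i)$. That is, every cycle set is obtained as a Zappa–Szép product of cycle sets whose classes are prime powers.
   Context: A cycle set is a set $S$ with a binary operation $*$ such that for every $s\in S$ the map $t\mapsto s*t$ is a bijection of $S$, and $(s*t)*(s*u)=(t*s)*(t*u)$ for all $s,t,u\in S$. For a finite cycle set $S=\{s_1,\dots,s_n\}$, let $\psi(s)\in\mathfrak S_n$ be the permutation with $s_i*s_j=s_{\psi(s_i)(j)}$, and let $T(s)=s*s$. For $k\ge 0$ put $\psi_k(s)=\psi(T^{k-1}(s))\circ\cdots\circ\psi(T(s))\circ\psi(s)$ ($\psi_0(s)=\mathrm{id}$). The (Dehornoy) class of $S$ is the smallest integer $d\ge 1$ with $\psi_d(s)=\mathrm{id}$ for all $s\in S$ (it exists). For $\sigma\in\mathfrak S_n$, $P_\sigma$ is the $n\times n$ matrix with entry $1$ at position $(i,\sigma(i))$ and $0$ elsewhere. Let $\zeta_m=e^{2i\pi/m}$. The germ of a cycle set of class $d$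 on $S$ is the subgroup of $GL_n(\mathbb C)$ generated by the matrices $\bar s_i=\mathrm{diag}(1,\dots,1,\zeta_d,1,\dots,1)P_{\psi(s_i)}$ ($\zeta_d$ in the $i$-th diagonal position), $1\le i\le n$; it is a group of monomial matrices whose nonzero entries are $d$-th roots of unity. For $m\mid d$, $\iota_m^{d}$ denotes the embedding of the group of $n\times n$ monomial matrices with nonzero entries in the $m$-th roots of unity into the analogous group for $d$-th roots of unity, obtained by replacing each entry $\zeta_m^{j}$ by $\zeta_d^{jd/m}$. For subsets $A,B$ of a group, $AB=\{ab: a\in A,b\in B\}$. *)

From HB Require Import structures.
From mathcomp Require Import all_boot all_order all_algebra all_field.
Set Implicit Arguments. Unset Strict Implicit. Unset Printing Implicit Defensive.
Import Order.TTheory GRing.Theory Num.Theory.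
Local Open Scope ring_scope.

(* A finite cycle set on S = {s_0,...,s_(n-1)} = 'I_n, given by op s t = s * t. *)
Definition is_cycle_set (n : nat) (op : 'I_n -> 'I_n -> 'I_n) : Prop :=
  (forall s, bijective (op s)) /\
  (forall s t u, op (op s t) (op s u) = op (op t s) (op t u)).

Definition Tsq (n : nat) (op : 'I_n -> 'I_n -> 'I_n) (s : 'I_n) : 'I_n := op s s.

Fixpoint psik (n : nat) (op : 'I_n -> 'I_n -> 'I_n) (k : nat) (s : 'I_n) (t : 'I_n)
  : 'I_n :=
  match k with
  | 0 => t
  | k'.+1 => op (iter k' (Tsq op) s) (psik op k' s t)
  end.

Definition is_class (n : nat) (op : 'I_n -> 'I_n -> 'I_n) (d : nat) : Prop :=
  (0 < d)%N /\ (forall s t, psik op d s t = t) /\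
  (forall d', (0 < d')%N -> (d' < d)%N -> exists s t, psik op d' s t <> t).

(* zeta_m = exp(2 i pi / m): m.-root (-1) is exp(i pi / m) in algC. *)
Definition zeta (m : nat) : algC := (m.-root (-1)) ^+ 2.

(* The generator bar s_i = diag(1,..,zeta_d (i-th),..,1) * P_(psi(s_i)),
   where P_sigma has 1 at (a, sigma a). *)
Definition germ_gen (n : nat) (op : 'I_n -> 'I_n -> 'I_n) (d : nat) (i : 'I_n)
  : 'M[algC]_n :=
  \matrix_(a < n, b < n)
    ((if a == i then zeta d else 1) * (op i a == b)%:R).

Inductive gen_group (n : nat) (I : Type) (g : I -> 'M[algC]_n) : 'M[algC]_n -> Prop :=
  | gg_one : gen_group g 1%:M
  | gg_gen : forall i, gen_group g (g i)
  | gg_mul : forall a b, gen_group g a -> gen_group g b -> gen_group g (a *m b)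
  | gg_inv : forall a, gen_group g a -> gen_group g (invmx a).

Definition germ (n : nat) (op : 'I_n -> 'I_n -> 'I_n) (d : nat) : 'M[algC]_n -> Prop :=
  gen_group (germ_gen op d).

(* iota_m^d : replace each entry zeta_m^j by zeta_d^(j d/m) (other entries, i.e. 0,
   are left unchanged). *)
Definition iota_entry (m d : nat) (x : algC) : algC :=
  if [pick j : 'I_m | x == zeta m ^+ j] is Some j
  then zeta d ^+ (j * (d %/ m))%N else x.

Definition iota_mx (m d : nat) (n : nat) (A : 'M[algC]_n) : 'M[algC]_n :=
  map_mx (iota_entry m d) A.

Definition prodmx (n : nat) (As : seq 'M[algC]_n) : 'M[algC]_n :=
  foldr (fun A B => A *m B) 1%:M As.

From HB Require Import structures.
From mathcomp Require Import all_boot all_order all_algebra all_field.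
From mathcomp Require Import ring zify.
From Stdlib Require Import FunctionalExtensionality.
Import Order.TTheory GRing.Theory Num.Theory.

Set Implicit Arguments. Unset Strict Implicit. Unset Printing Implicit Defensive.

(* The germ consists exactly of the monomial matrices [word_mx op d l] attached to
   words [l] in the generators: the permutation part is the action [word_psi op l]
   of the word and the diagonal carries [zeta d] raised to the letter multiplicities.
   By the cycle set law both parts only depend on the multiplicities of the letters,
   and modulo the class [d] at that.  For [d = q * m], with [q] the [p]-part of [d],
   the operation [s *_m t = psi_m(s)(t)] is a cycle set of class [q], and [iota]
   maps its word matrices to the word matrices of [op] for words in which every
   letter is repeated [m] times.  The [p']-parts of [d] have no common prime factor,
   so a combination of them is [1] modulo [d]; splitting the multiplicities of a word
   along it writes every germ element as an ordered product of such stretched words,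
   one for each prime.

   The one analytic input is that [zeta N] is a primitive [N]-th root of unity.
   [y = N.-root (-1)] is the [N]-th root of [-1] of largest real part.  Averaging
   over all [N]-th roots of [-1] against a parabola-shaped test polynomial (a discrete
   Wirtinger inequality) gives [1 - 'Re y <= 5 / (N^2 + 1)], whereas a root of [-1]
   of order [2 m] with [3 m <= N] lies at distance at least [2 / m] from [1]. *)

Local Open Scope ring_scope.

Lemma sum_expr_unity_root (R : idomainType) (x : R) n :
  x ^+ n = 1 -> x != 1 -> \sum_(j < n) x ^+ j = 0.
Proof.
move=> xn1 x_neq1; apply/eqP; have := subrX1 x n.
by rewrite xn1 subrr => /esym/eqP; rewrite mulf_eq0 subr_eq0 (negbTE x_neq1).
Qed.

Lemma normC_expr_eq1 (z : algC) n : (0 < n)%N -> `|z ^+ n| = 1 -> `|z| = 1.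
Proof. by move=> n_gt0 zn1; apply/eqP; rewrite -(pexpr_eq1 n_gt0) // -normrX zn1. Qed.

Lemma algCN1_neq1 : (-1 : algC) != 1.
Proof. by rewrite lt_eqF // (lt_trans (ltrN10 _) ltr01). Qed.

Lemma mul_conjC_eq1 (z : algC) : `|z| = 1 -> z * z^* = 1.
Proof. by move=> z1; rewrite -normCK z1 expr1n. Qed.

Lemma normC2_1sub (z : algC) : `|z| = 1 -> `|1 - z| ^+ 2 = 2 * (1 - 'Re z).
Proof.
move=> z1; rewrite normCK rmorphB rmorph1 ReE.
have zz := mul_conjC_eq1 z1.
have -> : (1 - z) * (1 - z^*) = 1 - z - z^* + z * z^* by ring.
by rewrite zz; field.
Qed.

Section DiscreteParseval.
Variables (n : nat) (y om : algC).
Hypotheses (y1 : `|y| = 1) (om_prim : n.-primitive_root om).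

Let n_gt0 : (0 < n)%N := prim_order_gt0 om_prim.
Let w (j : nat) := y * om ^+ j.

Lemma normC_root_shift j : `|y * om ^+ j| = 1.
Proof.
rewrite normrM normrX y1 (normC_expr_eq1 n_gt0) ?expr1n ?mulr1 //.
by rewrite (prim_expr_order om_prim) normr1.
Qed.

Lemma sum_root_powers s :
  \sum_(j < n) w j ^+ s = (n %| s)%:R * y ^+ s * n%:R.
Proof.
have -> : \sum_(j < n) w j ^+ s = y ^+ s * \sum_(j < n) (om ^+ s) ^+ j.
  by rewrite mulr_sumr; apply: eq_bigr => j _; rewrite /w exprMn exprAC.
rewrite (prim_order_dvd om_prim); have [-> | om_s] := eqVneq (om ^+ s) 1.
  by rewrite (eq_bigr (fun _ => 1)) => [|j _]; rewrite ?expr1n // sumr_const card_ord mul1r.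
rewrite sum_expr_unity_root ?mulr0 ?mul0r //.
by rewrite exprAC (prim_expr_order om_prim) expr1n.
Qed.

Lemma sum_root_orthogonal a b : (a < n)%N -> (b < n)%N ->
  \sum_(j < n) w j ^+ a * (w j)^* ^+ b = (a == b)%:R * n%:R.
Proof.
move=> a_lt b_lt.
have term j : w j ^+ a * (w j)^* ^+ b = (y ^+ n)^* * w j ^+ (a + (n - b)).
  have -> : (y ^+ n)^* = (w j ^+ n)^*.
    by rewrite /w exprMn exprAC (prim_expr_order om_prim) expr1n mulr1.
  have unit_pow : w j ^+ (n - b) * (w j)^* ^+ (n - b) = 1.
    by rewrite -exprMn mul_conjC_eq1 ?normC_root_shift // expr1n.
  rewrite rmorphXn -[in (w j)^* ^+ n](subnK (ltnW b_lt)) !exprD.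
  by rewrite -[LHS]mulr1 -unit_pow; ring.
under eq_bigr do rewrite term.
rewrite -mulr_sumr sum_root_powers.
have [<- | a_neq_b] := eqVneq a b.
  rewrite subnKC ?(ltnW a_lt) // dvdnn !mul1r mulrA [_^* * _]mulrC.
  by rewrite mul_conjC_eq1 ?mul1r // normrX y1 expr1n.
suff /negbTE -> : ~~ (n %| a + (n - b))%N by rewrite !mul0r mulr0.
move: a_neq_b; apply: contra_neqN => /dvdnP [[|[|k]] ek] /=; nia.
Qed.

Lemma parseval (p : {poly algC}) : (size p <= n)%N ->
  \sum_(j < n) `|p.[w j]| ^+ 2 = n%:R * \sum_(a < n) `|p`_a| ^+ 2.
Proof.
move=> p_size.
have expand j : `|p.[w j]| ^+ 2 =
    \sum_(a < n) \sum_(b < n) p`_a * (p`_b)^* * (w j ^+ a * (w j)^* ^+ b).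
  rewrite normCK (horner_coef_wide _ p_size) rmorph_sum mulr_suml.
  apply: eq_bigr => a _; rewrite mulr_sumr; apply: eq_bigr => b _.
  by rewrite rmorphM rmorphXn /=; ring.
under eq_bigr do rewrite expand.
rewrite exchange_big mulr_sumr /=.
apply: eq_bigr => a _; rewrite exchange_big /= (bigD1 a) //= [X in _ + X]big1.
  by rewrite -mulr_sumr sum_root_orthogonal // eqxx mul1r normCK addr0 mulrC.
move=> b b_neq_a.
by rewrite -mulr_sumr sum_root_orthogonal // val_eqE eq_sym (negbTE b_neq_a) mul0r mulr0.
Qed.
End DiscreteParseval.

Lemma chord_bound (z : algC) m : z ^+ m = -1 -> 4 <= m%:R ^+ 2 * `|1 - z| ^+ 2.
Proof.
move=> zm.
have m_gt0 : (0 < m)%N.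
  by case: m zm => // /eqP; rewrite expr0 eq_sym (negbTE algCN1_neq1).
have z1 : `|z| = 1 by rewrite (normC_expr_eq1 m_gt0) // zm normrN1.
have two : `|1 - z| * `|\sum_(i < m) z ^+ i| = 2.
  rewrite -normrM -opprB mulNr -subrX1 zm normrN -opprD normrN.
  by rewrite ger0_norm ?addr_ge0 ?ler01.
have sum_le : `|\sum_(i < m) z ^+ i| <= m%:R.
  apply: le_trans (ler_norm_sum _ _ _) _.
  by under eq_bigr do rewrite normrX z1 expr1n; rewrite sumr_const card_ord.
have -> : 4 = 2 ^+ 2 :> algC by rewrite expr2 -natrM.
rewrite -exprMn mulrC lerXn2r ?nnegrE ?mulr_ge0 //.
by rewrite -two ler_wpM2l.
Qed.

Lemma rootCN1_Re_max n (w : algC) :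
  (0 < n)%N -> w ^+ n = -1 -> 'Re w <= 'Re (n.-root (-1)).
Proof.
move=> n_gt0 wn; have [Im_ge0 | Im_lt0] := boolP (0 <= 'Im w).
  exact: rootC_Re_max.
rewrite -Re_conj rootC_Re_max // ?Im_conj ?oppr_ge0.
  by rewrite -rmorphXn /= wn rmorphN1.
by move: Im_lt0; rewrite -real_ltNge ?rpred0 ?Creal_Im // => /ltW.
Qed.

Section MaximalRoot.
Variables (n : nat) (y : algC).
Hypotheses (yn : y ^+ n = -1) (y_max : forall w, w ^+ n = -1 -> 'Re w <= 'Re y).

Lemma Re_max_root_energy (p : {poly algC}) : (size p < n)%N ->
  (1 - 'Re y) * \sum_(a < n) `|p`_a| ^+ 2
    <= (\sum_(a < n) `|((1 - 'X) * p)`_a| ^+ 2) / 2.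
Proof.
move=> p_size; have n_gt0 : (0 < n)%N by apply: leq_ltn_trans p_size.
have y1 : `|y| = 1 by rewrite (normC_expr_eq1 n_gt0) // yn normrN1.
have [om om_prim] := C_prim_root_exists n_gt0.
have pointwise j : (1 - 'Re y) * `|p.[y * om ^+ j]| ^+ 2
    <= `|((1 - 'X) * p).[y * om ^+ j]| ^+ 2 / 2.
  set w := y * om ^+ j.
  have w1 : `|w| = 1 := normC_root_shift y1 om_prim j.
  have wn : w ^+ n = -1 by rewrite exprMn exprAC (prim_expr_order om_prim) expr1n mulr1.
  rewrite hornerM hornerD hornerN hornerX hornerC normrM exprMn normC2_1sub //.
  rewrite mulrAC [2 * _]mulrC mulfK ?pnatr_eq0 // ler_wpM2r ?exprn_ge0 //.
  by rewrite lerD2l lerN2 y_max.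
have : \sum_(j < n) (1 - 'Re y) * `|p.[y * om ^+ j]| ^+ 2
    <= \sum_(j < n) `|((1 - 'X) * p).[y * om ^+ j]| ^+ 2 / 2.
  by apply: ler_sum => j _; apply: pointwise.
have size_1subX : size (1 - 'X : {poly algC}) = 2%N.
  by rewrite -opprB size_polyN -polyC1 size_XsubC.
rewrite -mulr_sumr -mulr_suml !parseval ?(ltnW p_size) //.
  by rewrite mulrCA -mulrA ler_pM2l ?ltr0n.
by apply: leq_trans (size_polyMleq _ _) _; rewrite size_1subX add2n.
Qed.
End MaximalRoot.

Definition parabola N : {poly algC} := \poly_(a < N) (a.+1 * (N - a))%:R.

Lemma coef_parabola N a : (parabola N)`_a = (a.+1 * (N - a))%:R.
Proof.
rewrite coef_poly; case: ltnP => // N_le_a.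
by rewrite (eqP (_ : N - a == 0)%N) ?subn_eq0 // muln0.
Qed.

Lemma coef_1subX_parabola N a : (a <= N)%N ->
  ((1 - 'X) * parabola N)`_a = N%:R - 2 * a%:R.
Proof.
move=> a_le; rewrite mulrBl mul1r coefB coefXM !coef_parabola.
case: a a_le => [|a] a_le /=; first by rewrite subn0 mul1n subr0 mulr0 subr0.
rewrite !natrM !natrB ?(ltnW a_le) // -addn1 natrD; ring.
Qed.

Lemma sum_parabola_sq N :
  30 * \sum_(a < N.+1) `|(parabola N)`_a| ^+ 2
    = (N * N.+1 * N.+2 * (N ^ 2 + 2 * N + 2))%:R.
Proof.
have closed_form M (K : algC) :
    30 * \sum_(a < M) ((a%:R + 1) * (K - a%:R)) ^+ 2 =
    let x := M%:R in
    4*x + 10*x*K + 5*x*K^+2 + 15*x^+2*K + 15*x^+2*K^+2 - 10*x^+3 - 10*x^+3*K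
    + 10*x^+3*K^+2 - 15*x^+4*K + 6*x^+5.
  elim: M => [|M IH]; first by rewrite big_ord0 /=; ring.
  by rewrite big_ord_recr /= mulrDr IH /=; ring.
rewrite (eq_bigr (fun a : 'I_N.+1 => ((a%:R + 1) * (N%:R - a%:R)) ^+ 2)) => [|a _].
  rewrite closed_form /= -[N.+2]addn2 -[N.+1]addn1.
  by rewrite !(natrM, natrD, natrX); ring.
rewrite coef_parabola normr_nat natrM natrB; last by rewrite -ltnS.
by rewrite -[a.+1]addn1 natrD.
Qed.

Lemma sum_1subX_parabola_sq N :
  3 * \sum_(a < N.+1) `|((1 - 'X) * parabola N)`_a| ^+ 2 = (N * N.+1 * N.+2)%:R.
Proof.
have closed_form M (K : algC) : 3 * \sum_(a < M) (K - 2 * a%:R) ^+ 2 =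
    let x := M%:R in
    3 * x * K ^+ 2 - 6 * K * x * (x - 1) + 2 * x * (x - 1) * (2 * x - 1).
  elim: M => [|M IH]; first by rewrite big_ord0 /=; ring.
  by rewrite big_ord_recr /= mulrDr IH /=; ring.
rewrite (eq_bigr (fun a : 'I_N.+1 => (N%:R - 2 * a%:R) ^+ 2)) => [|a _].
  rewrite closed_form /= -[N.+2]addn2 -[N.+1]addn1.
  by rewrite !(natrM, natrD); ring.
rewrite coef_1subX_parabola; last by rewrite -ltnS.
by rewrite real_normK // rpredB ?rpredM ?rpred_nat.
Qed.

Lemma parabola_energy_gap N m : (0 < N)%N -> (3 * m <= N.+1)%N ->
  m%:R ^+ 2 * \sum_(a < N.+1) `|((1 - 'X) * parabola N)`_a| ^+ 2
    < 4 * \sum_(a < N.+1) `|(parabola N)`_a| ^+ 2.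
Proof.
move=> N_gt0 m_le; set D := \sum_(a < _) _; set A := \sum_(a < _) _.
rewrite -(ltr_pM2l (_ : 0 < 30)) ?ltr0n //.
have -> : 30 * (m%:R ^+ 2 * D) = (10 * m ^ 2)%:R * (3 * D) by rewrite natrM natrX; ring.
rewrite (mulrCA 30 4) /A /D sum_parabola_sq sum_1subX_parabola_sq -!natrM ltr_nat.
set X := (N * N.+1 * N.+2)%N; set Q := (N ^ 2 + 2 * N + 2)%N.
rewrite mulnCA [(10 * m ^ 2 * X)%N]mulnC ltn_pmul2l ?muln_gt0 ?N_gt0 //.
have : (9 * m ^ 2 <= N.+1 ^ 2)%N by rewrite -[9%N]/(3 ^ 2)%N -expnMn leq_exp2r.
rewrite /Q; lia.
Qed.

Lemma rootCN1_expr_neqN1 n m : (0 < m)%N -> (3 * m <= n)%N ->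
  n.-root (-1 : algC) ^+ m != -1.
Proof.
move=> m_gt0; case: n => [|N] m_le; first by lia.
apply/eqP; set y := N.+1.-root (-1 : algC) => ym.
have yn : y ^+ N.+1 = -1 by rewrite rootCK.
have y_max w : w ^+ N.+1 = -1 -> 'Re w <= 'Re y by apply: rootCN1_Re_max.
have := Re_max_root_energy yn y_max (size_poly _ _ : (size (parabola N) < N.+1)%N).
set A := \sum_(a < _) _; set D := \sum_(a < _) _ => energy.
have chord := chord_bound ym.
have y1 : `|y| = 1 by rewrite (normC_expr_eq1 (ltn0Sn N)) // yn normrN1.
rewrite normC2_1sub // in chord.
have A_ge0 : 0 <= A by apply: sumr_ge0 => a _; rewrite exprn_ge0.
have N_gt0 : (0 < N)%N by lia.
suff : 4 * A <= m%:R ^+ 2 * D by rewrite lt_geF // parabola_energy_gap.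
apply: le_trans (ler_wpM2r A_ge0 chord) _.
rewrite -mulrA ler_wpM2l ?exprn_ge0 // -mulrA.
apply: le_trans (ler_wpM2l (ler0n _ 2) energy) _.
by rewrite mulrC mulfVK ?pnatr_eq0.
Qed.

Lemma prim_rootCN1 n : (0 < n)%N -> (2 * n).-primitive_root (n.-root (-1 : algC)).
Proof.
move=> n_gt0; set y := n.-root (-1 : algC).
have yn : y ^+ n = -1 by rewrite rootCK.
have y2n : y ^+ (2 * n) = 1 by rewrite mulnC exprM yn expr2 mulrNN mulr1.
have [o o_prim o_dvd] : {o | o.-primitive_root y & (o %| 2 * n)%N}.
  by apply: prim_order_exists y2n; rewrite muln_gt0.
have o_gt0 := prim_order_gt0 o_prim.
have o_ndvd : ~~ (o %| n)%N by rewrite (prim_order_dvd o_prim) yn algCN1_neq1.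
suff <- : o = (2 * n)%N by [].
have o_even : ~~ odd o.
  apply: contra o_ndvd => o_odd.
  by rewrite -(@Gauss_dvdr o 2 n) ?coprimen2.
have {o_even} [m o_eq] : exists m, o = (2 * m)%N.
  by exists o./2; rewrite mul2n -[LHS](odd_double_half o) (negbTE o_even).
have m_gt0 : (0 < m)%N by rewrite o_eq muln_gt0 in o_gt0.
have [k n_eq] : exists k, n = (k * m)%N.
  by apply/dvdnP; rewrite -(@dvdn_pmul2l 2) // -o_eq.
have ym : y ^+ m = -1.
  have : (y ^+ m) ^+ 2 == 1 by rewrite -exprM mulnC -o_eq prim_expr_order.
  rewrite sqrf_eq1 => /orP[|/eqP //].
  by rewrite -(prim_order_dvd o_prim) o_eq => /(dvdn_leq m_gt0); lia.
case: k n_eq => [|[|[|k]]] n_eq; first by lia.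
- by rewrite o_eq n_eq mul1n.
- by move: o_ndvd; rewrite o_eq n_eq dvdnn.
- suff : (3 * m <= n)%N by move/(rootCN1_expr_neqN1 m_gt0); rewrite ym eqxx.
  by rewrite n_eq; lia.
Qed.

Lemma prim_zeta n : (0 < n)%N -> n.-primitive_root (zeta n).
Proof.
move=> n_gt0; have := exp_prim_root (prim_rootCN1 n_gt0) 2.
by rewrite /zeta gcdnMr mulKn.
Qed.

Local Close Scope ring_scope.

Lemma nseqSr (T : Type) k (x : T) : nseq k.+1 x = rcons (nseq k x) x.
Proof. by elim: k => //= k ->. Qed.

Section WordPsi.
Variables (n : nat) (op : 'I_n -> 'I_n -> 'I_n).
Hypothesis op_cs : is_cycle_set op.

Definition word_psi (l : seq 'I_n) : 'I_n -> 'I_n :=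
  foldl (fun f u t => op (f u) (f t)) id l.

Lemma word_psi_rcons l u :
  word_psi (rcons l u) = fun t => op (word_psi l u) (word_psi l t).
Proof. by rewrite /word_psi foldl_rcons. Qed.

Lemma word_psi_cat l k : word_psi (l ++ k) = word_psi (map (word_psi l) k) \o word_psi l.
Proof.
elim/last_ind: k => [|k u IH]; first by rewrite cats0.
by rewrite -rcons_cat map_rcons !word_psi_rcons IH.
Qed.

Lemma word_psi_inj l : injective (word_psi l).
Proof.
have op_inj s : injective (op s) by case: op_cs => /(_ s) /bij_inj.
elim/last_ind: l => [|l u IH] //; rewrite word_psi_rcons => x y /op_inj; exact: IH.
Qed.

Lemma word_psi_swap l a b k :
  word_psi (l ++ a :: b :: k) = word_psi (l ++ b :: a :: k).
Proof.
have split2 x y : l ++ x :: y :: k = (l ++ [:: x; y]) ++ k by rewrite -catA.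
suff swap2 x y : word_psi [:: x; y] = word_psi [:: y; x].
  by rewrite !split2 !word_psi_cat /= swap2.
apply: functional_extensionality => t.
rewrite -[[:: x; y]]/(rcons [:: x] y) -[[:: y; x]]/(rcons [:: y] x).
by rewrite !word_psi_rcons; case: op_cs => _ ->.
Qed.

Lemma word_psi_perm l k : perm_eq l k -> word_psi l = word_psi k.
Proof.
have move_last l1 u l2 : word_psi (l1 ++ u :: l2) = word_psi (rcons (l1 ++ l2) u).
  elim: l2 l1 => [|x l2 IH] l1; first by rewrite cats0 cats1.
  by rewrite word_psi_swap -cat_rcons IH cat_rcons.
elim/last_ind: l k => [|l u IH] k; first by rewrite perm_sym => /perm_nilP ->.
move=> perm_lk; have u_in_k : u \in k by rewrite -(perm_mem perm_lk) mem_rcons mem_head.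
move: perm_lk; case/splitPr: u_in_k => k1 k2 perm_lk.
rewrite move_last !word_psi_rcons (IH (k1 ++ k2)) //.
rewrite -(perm_cons u) -perm_rcons; apply: perm_trans perm_lk _.
by rewrite -cat1s perm_catCA perm_refl.
Qed.

Lemma psikE k s : psik op k s = word_psi (nseq k s).
Proof.
have Tsq_iter j : word_psi (nseq j s) s = iter j (Tsq op) s.
  by elim: j => // j IH; rewrite nseqSr word_psi_rcons IH iterS.
apply: functional_extensionality => t.
by elim: k t => // k IH t; rewrite nseqSr word_psi_rcons /= IH Tsq_iter.
Qed.

Lemma word_psi_cat_nseq k : (forall s, word_psi (nseq k s) = id) ->
  forall j l s, word_psi (l ++ nseq (j * k) s) = word_psi l.
Proof.
move=> triv; elim=> [|j IH] l s; first by rewrite mul0n cats0.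
by rewrite mulSnr nseqD catA word_psi_cat map_nseq triv IH.
Qed.

Definition word_of_counts (g : 'I_n -> nat) : seq 'I_n :=
  flatten [seq nseq (g a) a | a <- enum 'I_n].

Lemma count_word_of_counts g a : count_mem a (word_of_counts g) = g a.
Proof.
rewrite count_flatten -map_comp sumnE big_map big_enum /=.
under eq_bigr do rewrite count_nseq.
rewrite (bigD1 a) //= eqxx mul1n big1 ?addn0 // => b /negbTE.
by rewrite eq_sym => ->.
Qed.

Section Class.
Variable d : nat.
Hypothesis op_class : is_class op d.

Lemma word_psi_nseq_class s : word_psi (nseq d s) = id.
Proof.
by case: op_class => _ [psid _]; rewrite -psikE; apply: functional_extensionality.
Qed.

Lemma class_dvdn k : (0 < k)%N -> (forall s, word_psi (nseq k s) = id) -> (d %| k)%N.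
Proof.
move=> k_gt0 triv; case: op_class => d_gt0 [_ d_min].
have [u v gE _] := egcdnP d k_gt0; set g := gcdn k d in gE.
have g_gt0 : (0 < g)%N by rewrite gcdn_gt0 k_gt0.
have triv_g s : word_psi (nseq g s) = id.
  rewrite -(word_psi_cat_nseq word_psi_nseq_class v (nseq g s) s) -nseqD addnC -gE.
  by rewrite -[nseq _ s]cat0s word_psi_cat_nseq.
have : (g <= d)%N by apply: dvdn_leq => //; exact: dvdn_gcdr.
rewrite leq_eqVlt => /orP[/eqP <- | g_lt_d]; first exact: dvdn_gcdl.
by have [s [t]] := d_min g g_gt0 g_lt_d; rewrite psikE triv_g.
Qed.

Lemma word_psi_count_mod l k :
  (forall a, count_mem a l = count_mem a k %[mod d]) -> word_psi l = word_psi k.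
Proof.
move=> lk_mod; pose pad w := word_of_counts (fun a => count_mem a w %/ d * d)%N.
have word_psi_pad w w' : word_psi (w' ++ pad w) = word_psi w'.
  rewrite /pad /word_of_counts; elim: (enum 'I_n) w' => [|a r IH] w' /=.
    by rewrite cats0.
  by rewrite catA IH word_psi_cat_nseq //; exact: word_psi_nseq_class.
rewrite -(word_psi_pad k l) -(word_psi_pad l k); apply: word_psi_perm.
apply/allP => a _; apply/eqP; rewrite !count_cat !count_word_of_counts.
by rewrite {1}(divn_eq (count_mem a l) d) {2}(divn_eq (count_mem a k) d) lk_mod; ring.
Qed.
End Class.
End WordPsi.

Section PsiOp.
Variables (n : nat) (op : 'I_n -> 'I_n -> 'I_n) (m : nat).
Hypothesis op_cs : is_cycle_set op.

Definition psi_op (s t : 'I_n) : 'I_n := word_psi op (nseq m s) t.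

Definition stretch (l : seq 'I_n) : seq 'I_n := flatten [seq nseq m u | u <- l].

Lemma count_stretch l a : count_mem a (stretch l) = (m * count_mem a l)%N.
Proof.
elim: l => [|x l IH]; first by rewrite muln0.
by rewrite /stretch /= count_cat -/(stretch l) IH count_nseq mulnDr mulnC.
Qed.

Lemma word_psi_psi_op l : word_psi psi_op l = word_psi op (stretch l).
Proof.
elim/last_ind: l => [|l u IH] //.
rewrite word_psi_rcons IH /stretch map_rcons flatten_rcons -/(stretch l) word_psi_cat.
by rewrite map_nseq.
Qed.

Lemma cycle_set_psi_op : is_cycle_set psi_op.
Proof.
split=> [s | s t u]; first exact/injF_bij/word_psi_inj.
have psi_op2 x y : psi_op (psi_op x y) (psi_op x u) = word_psi op (nseq m x ++ nseq m y) u.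
  by rewrite /psi_op word_psi_cat map_nseq.
have swap : perm_eq (nseq m s ++ nseq m t) (nseq m t ++ nseq m s).
  by rewrite perm_catC perm_refl.
by rewrite !psi_op2 (word_psi_perm op_cs swap).
Qed.

Lemma class_psi_op d q : is_class op d -> d = (q * m)%N -> (0 < q)%N -> is_class psi_op q.
Proof.
move=> op_class d_eq q_gt0.
have m_gt0 : (0 < m)%N by case: op_class; rewrite d_eq muln_gt0 => /andP[].
have psik_psi_op k s : psik psi_op k s = word_psi op (nseq (k * m) s).
  rewrite psikE word_psi_psi_op; congr word_psi.
  by elim: k => // k IH; rewrite mulSn nseqD -IH.
split=> //; split=> [s t | k k_gt0 k_lt_q].
  by rewrite psik_psi_op -d_eq word_psi_nseq_class.
case: (pickP (fun st => psik psi_op k st.1 st.2 != st.2)) => [[s t] /eqP | fixed].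
  by exists s, t.
have triv s : word_psi op (nseq (k * m) s) = id.
  apply: functional_extensionality => t.
  by move/negbFE/eqP: (fixed (s, t)); rewrite psik_psi_op.
have km_gt0 : (0 < k * m)%N by rewrite muln_gt0 k_gt0.
have := class_dvdn op_class km_gt0 triv.
by rewrite d_eq dvdn_pmul2r // => /(dvdn_leq k_gt0); rewrite leqNgt k_lt_q.
Qed.
End PsiOp.

Local Open Scope ring_scope.

Section MonomialMatrix.
Variable n : nat.

Definition monomial_mx (z : algC) (v : 'I_n -> nat) (s : 'I_n -> 'I_n) : 'M[algC]_n :=
  \matrix_(a, b) (z ^+ v a * (s a == b)%:R).

Lemma mul_monomial_mx z v s w t :
  monomial_mx z v s *m monomial_mx z w t
    = monomial_mx z (fun a => v a + w (s a))%N (t \o s).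
Proof.
apply/matrixP => a c; rewrite !mxE (bigD1 (s a)) //= big1 ?addr0.
  by rewrite !mxE eqxx mulr1 exprD mulrA.
by move=> b /negbTE; rewrite !mxE eq_sym => ->; rewrite mulr0 mul0r.
Qed.

Lemma eq_monomial_mx z v v' s s' :
  v =1 v' -> s =1 s' -> monomial_mx z v s = monomial_mx z v' s'.
Proof. by move=> vv' ss'; apply/matrixP => a b; rewrite !mxE vv' ss'. Qed.

Lemma monomial_mx_mod z d v v' s : z ^+ d = 1 ->
  (forall a, v a = v' a %[mod d]) -> monomial_mx z v s = monomial_mx z v' s.
Proof.
by move=> zd vv'; apply/matrixP => a b; rewrite !mxE -(expr_mod _ zd) vv' expr_mod.
Qed.

Section WordMatrix.
Variables (op : 'I_n -> 'I_n -> 'I_n) (d : nat).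
Hypothesis op_cs : is_cycle_set op.

Definition word_mx (l : seq 'I_n) : 'M[algC]_n :=
  monomial_mx (zeta d) (fun a => count_mem a l) (word_psi op l).

Lemma word_mx_nil : word_mx [::] = 1%:M.
Proof. by apply/matrixP => a b; rewrite !mxE expr0 mul1r. Qed.

Lemma word_mx_seq1 i : word_mx [:: i] = germ_gen op d i.
Proof.
by apply/matrixP => a b; rewrite !mxE /= addn0 eq_sym; case: (a == i).
Qed.

Lemma word_mx_cat l k : word_mx l *m word_mx (map (word_psi op l) k) = word_mx (l ++ k).
Proof.
rewrite mul_monomial_mx /word_mx word_psi_cat; apply: eq_monomial_mx => // a.
rewrite count_cat count_map; congr (_ + _)%N; apply: eq_count => x /=.
by rewrite (inj_eq (word_psi_inj op_cs (l:=l))).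
Qed.

Lemma word_mx_mul l k :
  word_mx l *m word_mx k = word_mx (l ++ map (invF (word_psi_inj op_cs (l:=l))) k).
Proof. by rewrite -word_mx_cat -map_comp (eq_map (f_invF _)) map_id. Qed.

Lemma germ_word_mx l : germ op d (word_mx l).
Proof.
elim/last_ind: l => [|l u IH]; first by rewrite word_mx_nil; apply: gg_one.
by rewrite -cats1 -word_mx_cat word_mx_seq1; apply: gg_mul IH (gg_gen _ _).
Qed.

Hypothesis op_class : is_class op d.

Lemma word_mx_count_mod l k :
  (forall a, count_mem a l = count_mem a k %[mod d]) -> word_mx l = word_mx k.
Proof.
move=> lk_mod; have d_gt0 : (0 < d)%N by case: op_class.
rewrite /word_mx (word_psi_count_mod op_cs op_class lk_mod).
exact: monomial_mx_mod (prim_expr_order (prim_zeta d_gt0)) lk_mod.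
Qed.

Lemma germP M : germ op d M <-> exists l, M = word_mx l.
Proof.
split=> [|[l ->]]; last exact: germ_word_mx.
elim=> [|i|A B _ [l ->] _ [k ->]|A _ [l ->]].
- by exists [::]; rewrite word_mx_nil.
- by exists [:: i]; rewrite word_mx_seq1.
- by eexists; apply: word_mx_mul.
have d_gt0 : (0 < d)%N by case: op_class.
pose k := map (word_psi op l) (flatten (nseq d.-1 l)).
have lk1 : word_mx l *m word_mx k = 1%:M.
  rewrite word_mx_cat -word_mx_nil; apply: word_mx_count_mod => a.
  have count_l j : count_mem a (flatten (nseq j l)) = (j * count_mem a l)%N.
    by elim: j => //= j IH; rewrite count_cat IH mulSn.
  by rewrite count_cat count_l -mulSn prednK // modnMr mod0n.
exists k; have [l_unit _] := mulmx1_unit lk1.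
by rewrite -[invmx _]mulmx1 -lk1 mulmxA mulVmx ?mul1mx.
Qed.
End WordMatrix.
End MonomialMatrix.

Lemma iota_entry_zeta q d c : (0 < d)%N -> (q %| d)%N ->
  iota_entry q d (zeta q ^+ c) = zeta d ^+ (c * (d %/ q)).
Proof.
move=> d_gt0 q_dvd; have q_gt0 := dvdn_gt0 d_gt0 q_dvd.
have zq := prim_zeta q_gt0.
rewrite /iota_entry; case: pickP => [j | no_j]; last first.
  by have := no_j (Ordinal (ltn_pmod c q_gt0)); rewrite /= (prim_expr_mod zq) eqxx.
rewrite (eq_prim_root_expr zq) => /eqP cj; apply/eqP.
rewrite (eq_prim_root_expr (prim_zeta d_gt0)).
have := divnK q_dvd; set m := (d %/ q)%N => d_eq.
have m_gt0 : (0 < m)%N by rewrite divn_gt0 // dvdn_leq.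
by rewrite -d_eq [(m * q)%N]mulnC -!muln_modl // cj.
Qed.

Lemma iota_entry0 q d : (0 < q)%N -> iota_entry q d 0 = 0.
Proof.
move=> q_gt0; rewrite /iota_entry; case: pickP => // j.
by rewrite eq_sym expf_eq0 (prim_root_eq0 (prim_zeta q_gt0)) (gtn_eqF q_gt0) andbF.
Qed.

Lemma iota_word_mx n (op : 'I_n -> 'I_n -> 'I_n) q m d l :
  is_cycle_set op -> (0 < d)%N -> d = (q * m)%N ->
  iota_mx q d (word_mx (psi_op op m) q l) = word_mx op d (stretch m l).
Proof.
move=> op_cs d_gt0 d_eq; subst d.
have q_gt0 : (0 < q)%N by move: d_gt0; rewrite muln_gt0 => /andP[].
apply/matrixP => a b; rewrite !mxE word_psi_psi_op count_stretch.
case: eqP => _; last by rewrite !mulr0 iota_entry0.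
by rewrite !mulr1 iota_entry_zeta ?dvdn_mulr // mulKn // (mulnC m).
Qed.

Local Close Scope ring_scope.

Lemma sum_coprime_parts_eq1 d : (1 < d)%N ->
  exists u : 'I_(size (primes d)) -> nat,
    \sum_(i < size (primes d)) d`_(nth 0 (primes d) i)^' * u i = 1 %[mod d].
Proof.
move=> d_gt1; have d_gt0 := ltnW d_gt1.
set r := size (primes d); pose P (i : 'I_r) := nth 0 (primes d) i.
exists (fun i => (egcdn d`_(P i)^' d`_(P i)).1); set S := \sum_(i < r) _.
have part_gt1 p : p \in primes d -> (1 < d`_p)%N.
  move=> p_d; rewrite p_part -[1%N](expn0 p) ltn_exp2l ?prime_gt1 ?logn_gt0 //.
  by move: p_d; rewrite mem_primes => /andP[].
have S_mod p : p \in primes d -> S %% d`_p = 1.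
  move=> p_d; have ip_lt : index p (primes d) < r by rewrite index_mem.
  pose ip : 'I_r := Ordinal ip_lt.
  have P_ip : P ip = p by rewrite /P /= nth_index.
  have inv_p : (d`_p^' * (egcdn d`_p^' d`_p).1) %% d`_p = 1.
    case: egcdnP => [|u v uE _]; first exact: part_gt0.
    move: (coprime_partC p d d); rewrite coprime_sym /coprime => /eqP cop.
    by rewrite mulnC uE cop modnMDl modn_small ?part_gt1.
  rewrite /S (bigD1 ip) //= -modnDmr P_ip.
  have -> : (\sum_(i < r | i != ip) d`_(P i)^' * (egcdn d`_(P i)^' d`_(P i)).1) %% d`_p = 0.
    apply/eqP; apply: dvdn_sum => i i_neq; apply: dvdn_mulr.
    have P_neq : P i != p by rewrite -P_ip /P nth_uniq ?ltn_ord ?primes_uniq.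
    rewrite -(@partn_part p (P i)^' d) ?dvdn_part // => x; rewrite !inE => /eqP ->.
    by rewrite eq_sym.
  by rewrite addn0 (nth_index 0 p_d) inv_p.
have S_gt0 : (0 < S)%N.
  have pdiv_d : pdiv d \in primes d by rewrite mem_primes pdiv_prime // d_gt0 pdiv_dvd.
  by rewrite lt0n; apply/eqP => S0; move: (S_mod _ pdiv_d); rewrite S0 mod0n.
apply/eqP; rewrite eqn_mod_dvd //; apply/dvdn_partP => // p p_d.
by rewrite -eqn_mod_dvd // S_mod // modn_small ?part_gt1.
Qed.

Section Decomposition.
Variables (n : nat) (op : 'I_n -> 'I_n -> 'I_n) (d r : nat) (ms u : 'I_r -> nat).
Hypothesis op_cs : is_cycle_set op.

Lemma prodmx_word_mx_stretch (js : seq 'I_r) : uniq js -> forall w : 'I_n -> nat,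
  exists (ls : 'I_r -> seq 'I_n) (L : seq 'I_n),
    prodmx [seq word_mx op d (stretch (ms i) (ls i)) | i <- js] = word_mx op d L /\
    forall a, count_mem a L = ((\sum_(i <- js) ms i * u i) * w a)%N.
Proof.
elim: js => [|j js IH] /= => [_ | /andP[j_notin js_uniq]] w.
  exists (fun=> [::]), [::]; split=> [|a]; last by rewrite big_nil.
  by rewrite word_mx_nil.
pose E := stretch (ms j) (word_of_counts (fun a => u j * w a)%N).
pose G := invF (word_psi_inj op_cs (l:=E)).
(* [word_mx_mul] relabels the letters of the later factors by [G], whence the weight [w \o G]. *)
have [ls [L [prodE countL]]] := IH js_uniq (w \o G).
exists (fun i => if i == j then word_of_counts (fun a => u j * w a)%N else ls i).
exists (E ++ map G L); split=> [|a].
  rewrite /prodmx /= eqxx -/(prodmx _) -word_mx_mul // -prodE; congr (_ *m prodmx _)%R.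
  by apply/eq_in_map => i i_in; case: eqP i_in => // ->; rewrite (negbTE j_notin).
rewrite count_cat count_stretch count_word_of_counts big_cons.
have -> : count_mem a (map G L) = count_mem (word_psi op E a) L.
  rewrite count_map; apply: eq_count => x /=.
  by rewrite -(inj_eq (word_psi_inj op_cs (l:=E))) f_invF eq_sym.
by rewrite countL /= /G invF_f mulnDl mulnA.
Qed.
End Decomposition.

Unset Implicit Arguments.
Local Open Scope ring_scope.

Theorem mainTheorem1 (n : nat) (op : 'I_n -> 'I_n -> 'I_n) (d : nat) :
  is_cycle_set op -> is_class op d -> (1 < d)%N ->
  exists (ops : 'I_(size (primes d)) -> 'I_n -> 'I_n -> 'I_n)
         (ds : 'I_(size (primes d)) -> nat),
    (forall i, is_cycle_set (ops i)) /\
    (forall i, is_class (ops i) (ds i)) /\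
    (forall i, exists k, ds i = (nth 0 (primes d) i ^ k)%N) /\
    (forall M : 'M[algC]_n,
       germ op d M <->
       exists Ms : 'I_(size (primes d)) -> 'M[algC]_n,
         (forall i, exists A, germ (ops i) (ds i) A /\ Ms i = iota_mx (ds i) d A) /\
         M = prodmx [seq Ms i | i <- enum 'I_(size (primes d))]).
Proof.
move=> op_cs op_class d_gt1; have d_gt0 := ltnW d_gt1.
set r := size (primes d); pose p (i : 'I_r) := nth 0%N (primes d) i.
pose q i := (d`_(p i))%N; pose m i := (d`_(p i)^')%N.
have d_eq i : d = (q i * m i)%N by rewrite partnC.
have sub_cs i := cycle_set_psi_op (m i) op_cs.
have sub_class i := class_psi_op op_class (d_eq i) (part_gt0 _ _).
exists (fun i => psi_op op (m i)), q; do 3!split=> //.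
  by move=> i; exists (logn (p i) d); rewrite /q p_part.
move=> M; split=> [/(germP op_cs op_class) [l ->] | [Ms [Ms_germ ->]]].
  have [u sum_u] := sum_coprime_parts_eq1 d_gt1.
  have [ls [L [prodL countL]]] :=
    prodmx_word_mx_stretch d m u op_cs (enum_uniq 'I_r) (fun a => count_mem a l).
  exists (fun i => word_mx op d (stretch (m i) (ls i))); split.
    move=> i; exists (word_mx (psi_op op (m i)) (q i) (ls i)).
    by rewrite (iota_word_mx _ op_cs d_gt0 (d_eq i)); split; first exact: germ_word_mx.
  rewrite prodL; apply: word_mx_count_mod => // a.
  by rewrite countL -modnMml big_enum /= sum_u modnMml mul1n.
elim: (enum 'I_r) => [|j js IH]; first exact: gg_one.
apply: gg_mul IH; have [A [/(germP (sub_cs j) (sub_class j)) [l ->] ->]] := Ms_germ j.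
by rewrite (iota_word_mx _ op_cs d_gt0 (d_eq j)); exact: germ_word_mx.
Qed.
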